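(* Let $d\in\mathbb N$ and let $(\mathrm{RN}_{n,M,Q})_{n,M,Q\in\mathbb Z}\subseteq\mathbb N_0$ satisfy for all $n,M,Q\in\mathbb N$ that $\mathrm{RN}_{0,M,Q}=0$ and $$\mathrm{RN}_{n,M,Q}\le dM^n+\sum_{l=0}^{n-1}\Big[QM^{n-l}\big(d+\mathrm{RN}_{l,M,Q}+\mathbb 1_{\mathbb N}(l)\,\mathrm{RN}_{l-1,M,Q}\big)\Big].$$ Then for all $N\in\mathbb N$, $\mathrm{RN}_{N,N,N}\le 8dN^{2N}$.
   Context: $\mathbb 1_{\mathbb N}(l)$ equals $1$ if $l\in\mathbb N=\{1,2,\dots\}$ and $0$ otherwise. *)

From mathcomp Require Import all_boot.
Set Implicit Arguments. Unset Strict Implicit. Unset Printing Implicit Defensive.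

Definition indN (l : nat) : nat := if 0 < l then 1 else 0.

From mathcomp Require Import all_boot all_order all_algebra zify ring lra.
From mathcomp Require Import reals sequences exp Rstruct.
Set Implicit Arguments. Unset Strict Implicit. Unset Printing Implicit Defensive.
Import Order.TTheory GRing.Theory Num.Theory.

(* Writing T_n for the right-hand side of the recursive bound (with RN_l in
   place of RN_{l,M,Q}), one has T_{n+1} = M T_n + QM (d + RN_n + RN_{n-1})
   <= M T_n + QM (d + T_n + T_{n-1}), so s_n := T_n + d satisfies
   s_{n+2} <= (M + QM) s_{n+1} + QM s_n.  Since y := QM + M + 1 satisfies
   y^2 >= (M + QM) y + QM, this gives s_n <= 2 d y^n.  For M = Q = N it
   remains to see (N^2 + N + 1)^N <= 4 N^(2N), i.e.
   (1 + (N + 1)/N^2)^N <= exp (1 + 1/N) <= exp (5/4) < 4 for N >= 4. *)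

Section ExpBounds.
Variable R : realType.
Local Open Scope ring_scope.

Lemma expR_le_inv1B (x : R) : x < 1 -> expR x <= (1 - x)^-1.
Proof.
move=> x_lt1; have x1_gt0 : 0 < 1 - x by rewrite subr_gt0.
rewrite -[expR x]invrK lef_pV2 ?posrE ?invr_gt0 ?expR_gt0 //.
by rewrite -expRN (le_trans _ (expR_ge1Dx _)).
Qed.

Lemma expR_5div4_le4 : expR (5 / 4 : R) <= 4.
Proof.
(* exp (1/8) <= 8/7 and (8/7)^10 < 4 *)
have -> : 5 / 4 = 10%:R * (8^-1 : R) by field.
rewrite expRM_natl.
apply: le_trans (_ : (1 - 8^-1)^-1 ^+ 10 <= 4).
- by rewrite lerXn2r ?nnegrE ?expR_ge0 ?invr_ge0 ?expR_le_inv1B //; lra.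
- have -> : (1 - 8^-1 : R)^-1 = 8 / 7 by field.
  rewrite !exprS expr0; lra.
Qed.

Lemma expr_sqrD_div_sqr_le4 (n : nat) : (4 <= n)%N ->
  ((n%:R * n%:R + n%:R + 1) / (n%:R * n%:R) : R) ^+ n <= 4.
Proof.
move=> n_ge4; set m : R := n%:R.
have m_ge4 : 4 <= m by rewrite ler_nat.
set x := (m + 1) / (m * m).
have -> : (m * m + m + 1) / (m * m) = 1 + x by rewrite /x; field; lra.
have x_ge0 : 0 <= x by rewrite /x divr_ge0 //; nra.
apply: le_trans (expR_5div4_le4).
apply: le_trans (_ : expR x ^+ n <= _).
  by rewrite lerXn2r ?nnegrE ?expR_ge0 ?expR_ge1Dx //; lra.
rewrite -expRM_natl ler_expR -/m /x.
have -> : m * ((m + 1) / (m * m)) = 1 + m^-1 by field; lra.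
suff : m^-1 <= 4^-1 by lra.
by rewrite lef_pV2 ?posrE //; lra.
Qed.

End ExpBounds.

Lemma expn_sqrD_le (N : nat) : 0 < N -> (N * N + N + 1) ^ N <= 4 * (N * N) ^ N.
Proof.
move=> N_gt0; have [|N_ge4] := ltnP N 4; first by case: N N_gt0 => [|[|[|[|]]]].
rewrite -(ler_nat Rdefinitions.R) natrM !natrX !natrD !natrM.
rewrite -ler_pdivrMr ?exprn_gt0 ?mulr_gt0 ?ltr0n // -expr_div_n.
exact: expr_sqrD_div_sqr_le4.
Qed.

Lemma leq_two_step_geometric (s : nat -> nat) (a b c y : nat) :
  a * y + b <= y * y -> s 0 <= c -> s 1 <= c * y ->
  (forall n, s n.+2 <= a * s n.+1 + b * s n) ->
  forall n, s n <= c * y ^ n.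
Proof.
move=> ay_le s0 s1 s_rec.
suff two_steps n : s n <= c * y ^ n /\ s n.+1 <= c * y ^ n.+1.
  by move=> n; case: (two_steps n).
elim: n => [|n [IHn IHn1]]; first by rewrite expn0 muln1 expn1.
split=> //; apply: leq_trans (s_rec n) _.
have -> : c * y ^ n.+2 = c * y ^ n * (y * y) by rewrite !expnS; ring.
apply: leq_trans (_ : a * (c * y ^ n.+1) + b * (c * y ^ n) <= _).
  by rewrite leq_add // leq_mul2l ?IHn1 ?IHn orbT.
have -> : a * (c * y ^ n.+1) + b * (c * y ^ n) = c * y ^ n * (a * y + b)
  by rewrite expnS; ring.
by rewrite leq_mul2l ay_le orbT.
Qed.

Section Majorant.
Variables (d M Q : nat) (r : nat -> nat).

Definition rn_majorant n :=
  d * M ^ n + \sum_(0 <= l < n) Q * M ^ (n - l) * (d + r l + indN l * r l.-1).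

Lemma rn_majorantS n :
  rn_majorant n.+1 = M * rn_majorant n + Q * M * (d + r n + indN n * r n.-1).
Proof.
rewrite /rn_majorant big_nat_recr //= subSnn.
under eq_big_nat => l /andP [_ l_lt_n].
  rewrite subSn 1?ltnW // expnS mulnCA -mulnA.
  over.
by rewrite -big_distrr /= expnS expn1; ring.
Qed.

Hypotheses (M_gt0 : 0 < M) (r0 : r 0 = 0)
  (r_le : forall n, 0 < n -> r n <= rn_majorant n).

Lemma rn_majorant_le n : rn_majorant n + d <= 2 * d * (M * Q + M + 1) ^ n.
Proof.
have r_le_all m : r m <= rn_majorant m by case: m => [|m]; rewrite ?r0 ?r_le.
apply: (@leq_two_step_geometric (fun n => rn_majorant n + d) (M + Q * M) (Q * M)).
- by nia.
- by rewrite /rn_majorant big_nil expn0; lia.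
- by rewrite rn_majorantS /rn_majorant big_nil r0 /indN /=; nia.
- move=> m; rewrite rn_majorantS /indN /= mul1n.
  have := leq_mul (leqnn (Q * M)) (r_le_all m.+1).
  have := leq_mul (leqnn (Q * M)) (r_le_all m).
  have : d <= M * d by rewrite leq_pmull.
  nia.
Qed.

End Majorant.

Theorem lemma3p15 (d : nat) (RN : nat -> nat -> nat -> nat) :
  0 < d ->
  (forall M Q, 0 < M -> 0 < Q -> RN 0 M Q = 0) ->
  (forall n M Q, 0 < n -> 0 < M -> 0 < Q ->
     RN n M Q <= d * M ^ n +
       \sum_(0 <= l < n) Q * M ^ (n - l) * (d + RN l M Q + indN l * RN l.-1 M Q)) ->
  forall N, 0 < N -> RN N N N <= 8 * d * N ^ (2 * N).
Proof.
move=> _ RN0 RN_rec N N_gt0.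
have majorant_le := rn_majorant_le (r := fun l => RN l N N) N_gt0
  (RN0 N N N_gt0 N_gt0) (fun n n_gt0 => RN_rec n N N n_gt0 N_gt0 N_gt0) N.
have RN_le : RN N N N <= rn_majorant d N N (fun l => RN l N N) N + d.
  by apply: leq_trans (leq_addr d _); exact: RN_rec.
apply: leq_trans (leq_trans RN_le majorant_le) _.
have := leq_mul (leqnn (2 * d)) (expn_sqrD_le N_gt0).
rewrite expnM mulnn; lia.
Qed.
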